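(* Suppose there exist $i, d \ge 2$ such that $o(\alpha_d) + a_i \ge c_R$, $o(\alpha_d) < \infty$, and $o(\alpha_d) \le o(\alpha_i) \le \infty$. Then $R = k[[\widetilde{x}_1, \ldots, \widetilde{x}_n]]$ where $\widetilde{x}_j = x_j$ for $j \ne i$ and $\widetilde{x}_i = t^{a_i}$, and $\widetilde{x}_1,\ldots,\widetilde{x}_n$ are again Herzog–Kunz generators of $R$.
   Context: Let $k$ be an algebraically closed field of characteristic $0$ and let $(R,\mathfrak m)$ be a complete local noetherian domain of dimension $1$ containing $k$ with $R/\mathfrak m = k$; its normalization is $\overline R = k[[t]]$, $R \subseteq k[[t]]$ finite birational. Let $v$ be the $t$-adic valuation; for $A \subseteq k((t))$ let $v(A) = \{v(f): f\in A\setminus\{0\}\}$. The conductor is $\mathfrak C_R = \{x\in\overline R : x\overline R\subseteq R\} = t^{c_R}\overline R$, $c_R$ the conductor degree. The Herzog–Kunz sequence of $R$ is $v(\mathfrak m)\setminus v(\mathfrak m^2)$ listed increasingly as $a_1<\cdots<a_n$; Herzog–Kunz generators are $x_i \in R$ with $v(x_i)=a_i$ (these satisfy $R = k[[x_1,\ldots,x_n]]$). Fix Herzog–Kunz generators $x_1, \ldots, x_n$ with $x_1 = t^{a_1}$ and, for $i \ge 2$, $x_i = \alpha_i t^{a_i}$ with $\alpha_i \in k[[t]]$ a unit of constant term $1$. Define $o(\alpha_i) = v(\alpha_i - 1)$ (so $o(\alpha_i) = \infty$ if $\alpha_i = 1$). *)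

From HB Require Import structures.
From mathcomp Require Import all_boot all_order all_algebra.
Set Implicit Arguments. Unset Strict Implicit. Unset Printing Implicit Defensive.
Import Order.TTheory GRing.Theory Num.Theory.
Local Open Scope ring_scope.

(* k[[t]] : f n is the coefficient of t^n *)
Definition ps (k : fieldType) := nat -> k.

Section PS.
Variable k : fieldType.

Definition ps_const (c : k) : ps k := fun n => if n == 0%N then c else 0.
Definition ps_add (f g : ps k) : ps k := fun n => f n + g n.
Definition ps_opp (f : ps k) : ps k := fun n => - f n.
Definition ps_mul (f g : ps k) : ps k :=
  fun n => \sum_(j < n.+1) f j * g (n - j)%N.
Definition ps_tpow (a : nat) : ps k := fun n => if n == a then 1 else 0.

(* v(f) >= N, i.e. f \in t^N k[[t]] (N = 0 always holds; f = 0 satisfies it for all N) *)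
Definition vge (f : ps k) (N : nat) : Prop := forall j, (j < N)%N -> f j = 0.
Definition has_val (f : ps k) (e : nat) : Prop := vge f e /\ f e <> 0.

Definition in_vset (A : ps k -> Prop) (e : nat) : Prop :=
  exists f, A f /\ has_val f e.

Definition is_k_subalg (S : ps k -> Prop) : Prop :=
  (forall c, S (ps_const c)) /\
  (forall f g, S f -> S g -> S (ps_add f g)) /\
  (forall f g, S f -> S g -> S (ps_mul f g)).

Definition tadic_closed (S : ps k -> Prop) : Prop :=
  forall f, (forall N, exists g, S g /\ forall j, (j < N)%N -> f j = g j) -> S f.

(* k[[y_1,...,y_n]] : the smallest t-adically closed k-subalgebra of k[[t]]
   containing y_1, ..., y_n *)
Definition kgen (n : nat) (y : nat -> ps k) (f : ps k) : Prop :=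
  forall S, is_k_subalg S -> tadic_closed S ->
    (forall j, (1 <= j <= n)%N -> S (y j)) -> S f.

Definition max_ideal (R : ps k -> Prop) (f : ps k) : Prop := R f /\ f 0%N = 0.

(* m^2 : the ideal generated by products of elements of m, i.e. the set of
   finite sums of such products (smallest additive set containing them) *)
Definition ideal_sq (m : ps k -> Prop) (f : ps k) : Prop :=
  forall S, S (ps_const 0) ->
    (forall g h, m g -> m h -> S (ps_mul g h)) ->
    (forall a b, S a -> S b -> S (ps_add a b)) -> S f.

Definition conductor_deg (R : ps k -> Prop) (c : nat) : Prop :=
  forall x, (forall y, R (ps_mul x y)) <-> vge x c.

Definition HK_sequence (R : ps k -> Prop) (n : nat) (a : nat -> nat) : Prop :=
  (forall j, (1 <= j)%N -> (j < n)%N -> (a j < a j.+1)%N) /\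
  (forall e, (in_vset (max_ideal R) e /\ ~ in_vset (ideal_sq (max_ideal R)) e)
             <-> exists j, [/\ (1 <= j)%N, (j <= n)%N & a j = e]).

Definition HK_generators (R : ps k -> Prop) (n : nat) (a : nat -> nat)
  (y : nat -> ps k) : Prop :=
  forall j, (1 <= j <= n)%N -> R (y j) /\ has_val (y j) (a j).

End PS.

(** [R] contains the conductor [t^c k[[t]]], hence is [t]-adically closed
    and contains every series congruent modulo [t^c] to one of its elements;
    since [x_i - t^(a_i) = (alpha_i - 1) t^(a_i)] has valuation
    [>= e + a_i >= c], this puts [t^(a_i)] in [R].  It remains to see that
    Herzog-Kunz generators always generate [R] topologically.  By induction
    on [N], every element of [R] is approximated modulo [t^(N+1)] by
    polynomial expressions in the generators: its leading term of valuation
    [v] is cancelled against [1], a generator, or, when [v] lies in [v(m^2)],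
    an element of [m^2], and products of elements of [m] only need their
    factors approximated modulo [t^N]. *)
From HB Require Import structures.
From mathcomp Require Import all_boot all_order all_algebra.
From Stdlib Require Import Classical FunctionalExtensionality.
From mathcomp Require Import zify ring.
Set Implicit Arguments. Unset Strict Implicit. Unset Printing Implicit Defensive.
Import Order.TTheory GRing.Theory Num.Theory.
Local Open Scope ring_scope.

Section Coefficients.
Variable k : fieldType.
Implicit Types f g h : ps k.

Lemma ps_const0 j : ps_const (0 : k) j = 0.
Proof. by rewrite /ps_const; case: (_ == _). Qed.

Lemma ps_mul_constl c f j : ps_mul (ps_const c) f j = c * f j.
Proof.
rewrite /ps_mul big_ord_recl /= subn0 /ps_const eqxx big1 ?addr0 //.
by move=> l _; rewrite mul0r.
Qed.

Lemma ps_mul_constr c f j : ps_mul f (ps_const c) j = f j * c.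
Proof.
rewrite /ps_mul big_ord_recr /= subnn /ps_const eqxx big1 ?add0r // => l _ /=.
by rewrite subn_eq0 leqNgt ltn_ord mulr0.
Qed.

Lemma ps_mul_tpowr f a j :
  ps_mul f (ps_tpow k a) j = if (a <= j)%N then f (j - a)%N else 0.
Proof.
rewrite /ps_mul /ps_tpow; case: leqP => [le_aj|lt_ja].
  have lt_jaj : (j - a < j.+1)%N by rewrite ltnS leq_subr.
  rewrite (bigD1 (Ordinal lt_jaj)) //= subKn // eqxx mulr1 big1 ?addr0 // => l.
  move=> /eqP ne_l; case: eqP => [eq_a|_]; last by rewrite mulr0.
  by case: ne_l; apply: val_inj => /=; have := ltn_ord l; lia.
rewrite big1 // => l _; case: eqP => [eq_a|_]; last by rewrite mulr0.
by have := ltn_ord l; lia.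
Qed.

Lemma ps_mulBl f g h j :
  ps_mul (ps_add f (ps_opp g)) h j = ps_mul f h j - ps_mul g h j.
Proof. by rewrite /ps_mul -sumrB; apply: eq_bigr => l _; rewrite mulrBl. Qed.

Lemma vge_mul_tpowr f e a : vge f e -> vge (ps_mul f (ps_tpow k a)) (e + a).
Proof. by move=> fe j lt_j; rewrite ps_mul_tpowr; case: leqP => // ?; apply: fe; lia. Qed.

Lemma has_val_tpow a : has_val (ps_tpow k a) a.
Proof.
split; first by move=> j lt_ja; rewrite /ps_tpow ifN_eq // ltn_eqF.
by rewrite /ps_tpow eqxx; apply/eqP; exact: oner_neq0.
Qed.

Lemma vge_mul_tpow_sub alpha e a :
  vge (ps_add alpha (ps_opp (ps_const 1))) e ->
  vge (ps_add (ps_mul alpha (ps_tpow k a)) (ps_opp (ps_tpow k a))) (e + a).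
Proof.
move=> /(vge_mul_tpowr (a := a)) alpha_e j lt_j; rewrite -[RHS](alpha_e j lt_j) ps_mulBl.
by rewrite /ps_add /ps_opp ps_mul_constl mul1r.
Qed.

End Coefficients.

Section Conductor.
Variables (k : fieldType) (R : ps k -> Prop) (c : nat).
Hypothesis R_add : forall f g, R f -> R g -> R (ps_add f g).
Hypothesis hc : conductor_deg R c.

Lemma conductor_mem f : vge f c -> R f.
Proof.
move=> fc; have := (hc f).2 fc (ps_const 1).
by congr R; apply: functional_extensionality => j; rewrite ps_mul_constr mulr1.
Qed.

Lemma conductor_congr f g : R g -> vge (ps_add g (ps_opp f)) c -> R f.
Proof.
move=> Rg gf; have -> : f = ps_add g (ps_opp (ps_add g (ps_opp f))).
  by apply: functional_extensionality => j; rewrite /ps_add /ps_opp; ring.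
apply: R_add => //; apply: conductor_mem => j lt_jc.
by rewrite /ps_opp gf // oppr0.
Qed.

Lemma conductor_tadic_closed : tadic_closed R.
Proof.
move=> f approx_f; have [g [Rg fg]] := approx_f c.
by apply: (conductor_congr Rg) => j lt_jc; rewrite /ps_add /ps_opp fg // subrr.
Qed.

End Conductor.

Section Approximation.
Variable k : fieldType.
Implicit Types f g p q : ps k.

Definition ps_agree N f g := forall j, (j < N)%N -> f j = g j.

Definition approx_in (S : ps k -> Prop) N f := exists g, S g /\ ps_agree N f g.

(** For series without constant term, the coefficient of [t^m] in a product
    only involves coefficients of order [< m] of the factors. *)
Lemma ps_agree_mul N f g p q :
  ps_agree N.+1 f p -> ps_agree N.+1 g q -> f 0%N = 0 -> g 0%N = 0 ->
  ps_agree N.+2 (ps_mul f g) (ps_mul p q).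
Proof.
move=> fp gq f0 g0 j lt_jN; apply: eq_bigr => l _.
have p0 : p 0%N = 0 by rewrite -fp.
have q0 : q 0%N = 0 by rewrite -gq.
have := ltn_ord l; rewrite ltnS => le_lj.
have [-> | l_gt0] := posnP l; first by rewrite f0 p0 !mul0r.
have [-> | jl_gt0] := posnP (j - l); first by rewrite g0 q0 !mulr0.
by rewrite fp ?gq //; lia.
Qed.

Variable S : ps k -> Prop.
Hypothesis hS : is_k_subalg S.

Lemma approx_in_vge N f : vge f N -> approx_in S N f.
Proof.
by move=> fN; exists (ps_const 0); split; [case: hS | move=> j /fN ->; rewrite ps_const0].
Qed.

Lemma approx_in_lincomb N f p q (lam : k) :
  approx_in S N p -> approx_in S N q -> (forall j, f j = p j + lam * q j) ->
  approx_in S N f.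
Proof.
have [S_const [S_add S_mul]] := hS.
move=> [p' [Sp' pp']] [q' [Sq' qq']] f_pq.
exists (ps_add p' (ps_mul (ps_const lam) q')); split; first by apply/S_add/S_mul.
by move=> j lt_jN; rewrite f_pq /ps_add ps_mul_constl pp' ?qq'.
Qed.

End Approximation.

Section HerzogKunzGeneration.
Variables (k : fieldType) (R : ps k -> Prop).
Hypothesis hR : is_k_subalg R.
Variables (n : nat) (a : nat -> nat) (y : nat -> ps k).
Hypothesis ha : HK_sequence R n a.
Hypothesis hy : HK_generators R n a y.
Variable S : ps k -> Prop.
Hypothesis hS : is_k_subalg S.
Hypothesis hyS : forall j, (1 <= j <= n)%N -> S (y j).

Lemma ideal_sq_max_ideal_sub h : ideal_sq (max_ideal R) h -> R h.
Proof.
have [R_const [R_add R_mul]] := hR.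
by apply=> // f g [Rf _] [Rg _]; apply: R_mul.
Qed.

Section Step.
Variable N : nat.
Hypothesis approx_R : forall f, R f -> approx_in S N f.

Lemma approx_in_ideal_sq h : ideal_sq (max_ideal R) h -> approx_in S N.+1 h.
Proof.
have [_ [_ S_mul]] := hS.
apply.
- exact/approx_in_vge/(fun j _ => ps_const0 k j).
- move=> f g [Rf f0] [Rg g0]; case: N approx_R => [|M] approx_RM.
    apply: (approx_in_vge hS) => j; rewrite ltnS leqn0 => /eqP ->.
    by rewrite /ps_mul big_ord1 f0 mul0r.
  have [p [Sp fp]] := approx_RM f Rf; have [q [Sq gq]] := approx_RM g Rg.
  by exists (ps_mul p q); split; [apply: S_mul | apply: ps_agree_mul].
- by move=> f g Af Ag; apply: (approx_in_lincomb hS (lam := 1) Af Ag) => j; rewrite mul1r.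
Qed.

Lemma approx_in_val v :
  (v <= N)%N -> in_vset R v -> exists2 w, R w /\ has_val w v & approx_in S N.+1 w.
Proof.
have [R_const _] := hR; have [S_const _] := hS.
move=> le_vN [f [Rf [fv fv_neq0]]]; case: v le_vN fv fv_neq0 => [|v] le_vN fv fv_neq0.
  exists (ps_const 1); last by exists (ps_const 1).
  by split=> //; split=> //; rewrite /ps_const eqxx; apply/eqP; exact: oner_neq0.
have [[h [sq_h hv]] | not_sq] := classic (in_vset (ideal_sq (max_ideal R)) v.+1).
  by exists h; [split=> //; apply: ideal_sq_max_ideal_sub | apply: approx_in_ideal_sq].
have m_v : in_vset (max_ideal R) v.+1 by exists f; do !split=> //; apply: fv.
have [j [j_ge1 j_le <-]] := (ha.2 v.+1).1 (conj m_v not_sq).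
have j_range : (1 <= j <= n)%N by rewrite j_ge1 j_le.
by exists (y j); [apply: hy | exists (y j); split=> //; apply: hyS].
Qed.

Lemma approx_in_cancel_lead v f :
  (v <= N)%N -> (forall g, R g -> vge g v.+1 -> approx_in S N.+1 g) ->
  R f -> vge f v -> approx_in S N.+1 f.
Proof.
have [R_const [R_add R_mul]] := hR.
move=> le_vN approx_above Rf fv.
have vgeS g : vge g v -> g v = 0 -> vge g v.+1.
  by move=> gv gv0 j; rewrite ltnS leq_eqVlt => /predU1P[-> | /gv].
have [fv0 | fv_neq0] := eqVneq (f v) 0; first by apply: approx_above => //; apply: vgeS.
have f_val : has_val f v by split=> //; apply/eqP.
have [w [Rw [wv wv_neq0]] approx_w] := approx_in_val le_vN (ex_intro _ f (conj Rf f_val)).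
pose lam := f v / w v.
pose f' := ps_add f (ps_mul (ps_const (- lam)) w).
apply: (approx_in_lincomb hS (p := f') (lam := lam) _ approx_w); last first.
  by move=> j; rewrite /f' /ps_add ps_mul_constl mulNr addrNK.
apply: approx_above; first by apply/R_add/R_mul.
apply: vgeS => [j lt_jv | ]; rewrite /f' /ps_add ps_mul_constl.
  by rewrite fv // wv // mulr0 addr0.
by rewrite /lam mulNr divfK ?subrr //; apply/eqP.
Qed.

Lemma approx_in_succ f : R f -> approx_in S N.+1 f.
Proof.
suff approx_above m g : (m <= N.+1)%N -> R g -> vge g (N.+1 - m) -> approx_in S N.+1 g.
  by move=> Rf; apply: (approx_above N.+1) => //; rewrite subnn.
elim: m g => [|m IHm] g le_m Rg gv; first by apply: approx_in_vge; rewrite subn0 in gv.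
rewrite subSS in gv; apply: (approx_in_cancel_lead (leq_subr m N)) => // h Rh hv.
by apply: IHm => //; [apply: ltnW | rewrite subSn].
Qed.

End Step.

Lemma approx_in_all N f : R f -> approx_in S N f.
Proof.
elim: N f => [|N IHN] f Rf; first exact: approx_in_vge.
exact: approx_in_succ.
Qed.

Lemma HK_generators_sub : tadic_closed S -> forall f, R f -> S f.
Proof. by move=> S_closed f Rf; apply: S_closed => N; apply: approx_in_all. Qed.

End HerzogKunzGeneration.

Section Kgen.
Variables (k : fieldType) (n : nat) (y : nat -> ps k).

Lemma kgen_subalg : is_k_subalg (kgen n y).
Proof.
split; first by move=> c0 S [S_const _].
split=> f g kf kg S hS S_closed yS; have [_ [S_add S_mul]] := hS.
  by apply: S_add; [apply: kf | apply: kg].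
by apply: S_mul; [apply: kf | apply: kg].
Qed.

Lemma kgen_tadic_closed : tadic_closed (kgen n y).
Proof.
move=> f approx_f S hS S_closed yS; apply: (S_closed) => N.
by have [g [kg fg]] := approx_f N; exists g; split=> //; exact: kg hS S_closed yS.
Qed.

Lemma kgen_mem j : (1 <= j <= n)%N -> kgen n y (y j).
Proof. by move=> j_range S _ _ yS; apply: yS. Qed.

End Kgen.

Theorem mainTheorem9
  (k : closedFieldType) (hchar : [pchar k] =i pred0)
  (R : ps k -> Prop) (hR : is_k_subalg R)
  (c : nat) (hc : conductor_deg R c)
  (n : nat) (a : nat -> nat) (ha : HK_sequence R n a)
  (x alpha : nat -> ps k)
  (hxgen : HK_generators R n a x)
  (hx1 : x 1%N = ps_tpow k (a 1%N))
  (hxj : forall j, (2 <= j <= n)%N ->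
           x j = ps_mul (alpha j) (ps_tpow k (a j)) /\ alpha j 0%N = 1)
  (i d : nat) (hi : (2 <= i <= n)%N) (hd : (2 <= d <= n)%N)
  (e : nat) (he : has_val (ps_add (alpha d) (ps_opp (ps_const 1))) e)
  (hec : (c <= e + a i)%N)
  (hei : vge (ps_add (alpha i) (ps_opp (ps_const 1))) e) :
  let xt := fun j => if j == i then ps_tpow k (a i) else x j in
  (forall f, R f <-> kgen n xt f) /\ HK_generators R n a xt.
Proof.
(* The hypotheses on [d] only serve to fix [e]. *)
move=> xt; have [_ [R_add _]] := hR.
have i_range : (1 <= i <= n)%N by case/andP: hi => /ltnW -> ->.
have Rt : R (ps_tpow k (a i)).
  apply: (conductor_congr R_add hc (hxgen i i_range).1).
  rewrite (hxj i hi).1 => j lt_jc; apply: (vge_mul_tpow_sub hei).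
  exact: leq_trans lt_jc hec.
have hxt : HK_generators R n a xt.
  move=> j j_range; rewrite /xt; case: eqP => [-> | _]; last exact: hxgen.
  by split=> //; apply: has_val_tpow.
split=> // f; split=> [Rf | kf].
  apply: (HK_generators_sub hR ha hxt (kgen_subalg n xt)) Rf; first exact: kgen_mem.
  exact: kgen_tadic_closed.
apply: kf => // [|j /hxt[]//]; exact: conductor_tadic_closed R_add hc.
Qed.
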